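(* Let $a\ge b\ge1$ be integers with either $b\ge2$, or $b=1$ and $a\ge5$, and $A=\begin{pmatrix}2&-a\\-b&2\end{pmatrix}$. For $j\in\mathbb Z_+$ set $\eta_j=-\langle\beta_1^j,(\beta_2^0)^\vee\rangle$ and $\gamma_j=-\langle\beta_2^{2j},(\beta_1^0)^\vee\rangle$. Then both sequences $\xi_j:=\eta_{2j}$ and $\zeta_j:=\eta_{2j+1}$ satisfy the recurrence $x_j=(ab-2)x_{j-1}-x_{j-2}$ ($j\ge2$) with initial conditions $\xi_0=a$, $\xi_1=a(ab-3)$ and $\zeta_0=ab-2$, $\zeta_1=\zeta_0^2-2$. Moreover $a\gamma_j=b\xi_j$ for all $j$; $(\eta_j)$ is constant if $a=b=2$; if $b=1$ and $a\ge5$ then $\eta_1<\eta_0<\eta_3<\eta_2<\eta_5<\cdots$; and in the remaining cases ($b\ge2$, $(a,b)\ne(2,2)$) $\eta_0<\eta_1<\eta_2<\cdots$.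
   Context: Let $\mathfrak g(A)$ have simple roots $\alpha_1,\alpha_2$, invariant form $(\alpha_1,\alpha_1)=2$, $(\alpha_2,\alpha_2)=2a/b$, $(\alpha_1,\alpha_2)=-a$, and for a real root $\beta$ let $\langle\lambda,\beta^\vee\rangle=2(\lambda,\beta)/(\beta,\beta)$. $\mathbb Z_+=\{0,1,2,\dots\}$. Define $c_0=d_0=0$, $c_1=d_1=1$, $c_{k+2}+c_k=a d_{k+1}$, $d_{k+2}+d_k=b c_{k+1}$, and $\beta_1^j=c_j\alpha_1+d_{j+1}\alpha_2$, $\beta_2^j=c_{j+1}\alpha_1+d_j\alpha_2$; in particular $\beta_2^0=\alpha_1$, $\beta_1^0=\alpha_2$. *)

From mathcomp Require Import all_boot all_order all_algebra.
Set Implicit Arguments. Unset Strict Implicit. Unset Printing Implicit Defensive.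
Import Order.TTheory GRing.Theory Num.Theory.
Local Open Scope ring_scope.

(* Rank-2 root lattice: an element x1*alpha_1 + x2*alpha_2 is the pair (x1, x2). *)

Fixpoint cd (a b : nat) (k : nat) : int * int * int * int :=
  match k with
  | 0%N => (0, 0, 1, 1)
  | k'.+1 => let '(c0, d0, c1, d1) := cd a b k' in
             (c1, d1, (a%:Z) * d1 - c0, (b%:Z) * c1 - d0)
  end.

Definition cseq (a b : nat) (k : nat) : int := (cd a b k).1.1.1.
Definition dseq (a b : nat) (k : nat) : int := (cd a b k).1.1.2.

Definition beta1 (a b : nat) (j : nat) : int * int := (cseq a b j, dseq a b j.+1).
Definition beta2 (a b : nat) (j : nat) : int * int := (cseq a b j.+1, dseq a b j).

(* Invariant form: (a1,a1)=2, (a2,a2)=2a/b, (a1,a2)=-a, extended bilinearly. *)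
Definition form (a b : nat) (x y : int * int) : rat :=
  2 * (x.1%:~R * y.1%:~R)
  - (a%:R) * (x.1%:~R * y.2%:~R + x.2%:~R * y.1%:~R)
  + (2 * (a%:R) / (b%:R)) * (x.2%:~R * y.2%:~R).

Definition copair (a b : nat) (lam beta : int * int) : rat :=
  2 * form a b lam beta / form a b beta beta.

Definition eta (a b : nat) (j : nat) : rat := - copair a b (beta1 a b j) (beta2 a b 0).
Definition gamma (a b : nat) (j : nat) : rat := - copair a b (beta2 a b (2 * j)) (beta1 a b 0).
Definition xi (a b : nat) (j : nat) : rat := eta a b (2 * j).
Definition zeta (a b : nat) (j : nat) : rat := eta a b (2 * j).+1.

From Pilot Require Import Defs.
From mathcomp Require Import all_boot all_order all_algebra.
From mathcomp Require Import zify ring lra.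
Set Implicit Arguments.
Unset Strict Implicit.
Unset Printing Implicit Defensive.

Import Order.TTheory GRing.Theory Num.Theory.
Local Open Scope ring_scope.

(* As (alpha_1, alpha_1) = 2, eta_j = -(beta_1^j, alpha_1) = a d_{j+1} - 2 c_j is an
   integer.  Two steps of the recurrence for (c, d) give
   u_{k+4} = (ab - 2) u_{k+2} - u_k for u = c, d, hence for eta; so the even and odd
   subsequences of eta, and differences of shifted such subsequences, satisfy the
   Chebyshev recurrence x_{k+2} = (ab - 2) x_{k+1} - x_k.  Since ab - 2 >= 2, such a
   sequence stays positive once it starts positive and nondecreasing, so the orderings
   between the eta_j reduce to inequalities between eta_0, ..., eta_5. *)

Lemma rec2_gt0 (R : realDomainType) (m : R) (x : nat -> R) :
  2 <= m -> 0 < x 0%N -> x 0%N <= x 1%N ->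
  (forall k, x k.+2 = m * x k.+1 - x k) -> forall k, 0 < x k.
Proof.
move=> m_ge2 x0_gt0 x0_le1 xSS.
suff x_gt0_nondecr : forall k, 0 < x k /\ x k <= x k.+1.
  by move=> k; have [] := x_gt0_nondecr k.
elim=> [|k [xk_gt0 xk_le]] //; rewrite xSS; split; [lra | nra].
Qed.

Lemma rec4_diff_gt0 (R : realDomainType) (m : R) (u : nat -> R) (p q : nat) :
  2 <= m -> (forall n, u n.+4 = m * u n.+2 - u n) ->
  u q < u p -> u p - u q <= u p.+2 - u q.+2 ->
  forall k, u (q + k.*2)%N < u (p + k.*2)%N.
Proof.
move=> m_ge2 uS4 uq_lt_up u_diff_le k; rewrite -subr_gt0.
apply: (rec2_gt0 (x := fun k => u (p + k.*2)%N - u (q + k.*2)%N) m_ge2) => //=.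
- by rewrite !addn0 subr_gt0.
- by rewrite !addn0 !addn2.
- by move=> {}k; rewrite !doubleS !addnS !uS4; ring.
Qed.

Section RootStrings.

Variables a b : nat.

Local Notation c := (cseq a b).
Local Notation d := (dseq a b).
Local Notation m := (a%:Z * b%:Z - 2).

Lemma cdE k : cd a b k = (c k, d k, c k.+1, d k.+1).
Proof. by rewrite /cseq /dseq; elim: k => //= k ->. Qed.

Lemma cseqSS k : c k.+2 = a%:Z * d k.+1 - c k.
Proof. by rewrite {1}/cseq /= cdE. Qed.

Lemma dseqSS k : d k.+2 = b%:Z * c k.+1 - d k.
Proof. by rewrite {1}/dseq /= cdE. Qed.

Lemma cseqS4 k : c k.+4 = m * c k.+2 - c k.
Proof.
have ad : a%:Z * d k.+1 = c k.+2 + c k by rewrite cseqSS; ring.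
by rewrite cseqSS dseqSS mulrBr ad; ring.
Qed.

Lemma dseqS4 k : d k.+4 = m * d k.+2 - d k.
Proof.
have bc : b%:Z * c k.+1 = d k.+2 + d k by rewrite dseqSS; ring.
by rewrite dseqSS cseqSS mulrBr mulrCA bc; ring.
Qed.

Lemma cseq_dseq_double k : c k.*2.+1 = d k.*2.+1 /\ b%:Z * c k.*2 = a%:Z * d k.*2.
Proof.
elim: k => [|k [c_odd c_even]]; first by split; rewrite /cseq /dseq /=; ring.
rewrite doubleS !cseqSS !dseqSS c_odd.
by split; [rewrite cseqSS|]; rewrite !mulrBr c_even; ring.
Qed.

Definition etaz j : int := a%:Z * d j.+1 - 2 * c j.

Lemma etazS4 j : etaz j.+4 = m * etaz j.+2 - etaz j.
Proof. by rewrite /etaz cseqS4 dseqS4; ring. Qed.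

Lemma etaz0 : etaz 0 = a.
Proof. by rewrite /etaz /cseq /dseq /=; ring. Qed.

Lemma etaz1 : etaz 1 = m.
Proof. by rewrite /etaz /cseq /dseq /=; ring. Qed.

Lemma etaz2 : etaz 2 = a%:Z * (a%:Z * b%:Z - 3).
Proof. by rewrite /etaz /cseq /dseq /=; ring. Qed.

Lemma etaz3 : etaz 3 = m ^+ 2 - 2.
Proof. by rewrite /etaz /cseq /dseq /=; ring. Qed.

Lemma etaz_increasing : (2 <= b)%N -> (3 <= a)%N -> forall j, etaz j < etaz j.+1.
Proof.
move=> b_ge2 a_ge3 j.
have m_ge2 : 2 <= m by nia.
have etaz4 := etazS4 0; rewrite etaz2 etaz0 in etaz4.
rewrite -[j]odd_double_half; case: (odd j).
- apply: (rec4_diff_gt0 (p := 2) (q := 1) m_ge2 etazS4).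
  + by rewrite etaz2 etaz1; nia.
  + by rewrite etaz4 etaz3 etaz2 etaz1; nia.
- apply: (rec4_diff_gt0 (p := 1) (q := 0) m_ge2 etazS4).
  + by rewrite etaz1 etaz0; nia.
  + by rewrite etaz3 etaz2 etaz1 etaz0; nia.
Qed.

Hypothesis b_gt0 : (0 < b)%N.

Lemma etaE j : eta a b j = (etaz j)%:~R.
Proof.
rewrite /eta /copair /Defs.form /beta2 /beta1 /etaz /=.
rewrite [cseq a b 1]/cseq [dseq a b 0]/dseq /=.
by rewrite !rmorphB !rmorphM /=; field; rewrite pnatr_eq0 -lt0n.
Qed.

Lemma xiSS j : xi a b j.+2 = ((a * b)%:R - 2) * xi a b j.+1 - xi a b j.
Proof. by rewrite /xi !etaE !mul2n !doubleS etazS4 natrM; ring. Qed.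

Lemma xi0 : xi a b 0 = a%:R.
Proof. by rewrite /xi etaE etaz0. Qed.

Lemma xi1 : xi a b 1 = a%:R * ((a * b)%:R - 3).
Proof. by rewrite /xi etaE etaz2 natrM; ring. Qed.

Lemma zetaSS j : zeta a b j.+2 = ((a * b)%:R - 2) * zeta a b j.+1 - zeta a b j.
Proof. by rewrite /zeta !etaE !mul2n !doubleS etazS4 natrM; ring. Qed.

Lemma zeta0 : zeta a b 0 = (a * b)%:R - 2.
Proof. by rewrite /zeta etaE etaz1 natrM; ring. Qed.

Lemma zeta1 : zeta a b 1 = zeta a b 0 ^+ 2 - 2.
Proof. by rewrite /zeta !etaE etaz1 etaz3; ring. Qed.

Hypothesis a_gt0 : (0 < a)%N.

Lemma gammaE j : gamma a b j = (b%:Z * c (2 * j).+1 - 2 * d (2 * j))%:~R.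
Proof.
rewrite /gamma /copair /Defs.form /beta2 /beta1 /=.
rewrite [cseq a b 0]/cseq [dseq a b 1]/dseq /=.
by rewrite !rmorphB !rmorphM /=; field; rewrite !pnatr_eq0 -!lt0n a_gt0 b_gt0.
Qed.

Lemma a_gamma_eq_b_xi j : a%:R * gamma a b j = b%:R * xi a b j.
Proof.
have [c_odd c_even] := cseq_dseq_double j.
rewrite gammaE /xi etaE /etaz mul2n c_odd [a%:R]pmulrn [b%:R]pmulrn -!intrM; congr _%:~R.
by rewrite !mulrBr [b%:Z * (2 * _)]mulrCA c_even; ring.
Qed.

End RootStrings.

Lemma cseq_dseq22 k : cseq 2 2 k = k /\ dseq 2 2 k = k.
Proof.
suff cd22 : cd 2 2 k = (k%:Z, k%:Z, k.+1%:Z, k.+1%:Z) by rewrite /cseq /dseq cd22.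
by elim: k => //= k ->; congr (_, _, _, _); lia.
Qed.

Lemma etaz22 j : etaz 2 2 j = 2.
Proof.
have [c22 _] := cseq_dseq22 j; have [_ d22] := cseq_dseq22 j.+1.
by rewrite /etaz c22 d22; lia.
Qed.

Lemma eta22 j : eta 2 2 j = eta 2 2 0.
Proof. by rewrite !etaE // !etaz22. Qed.

Lemma eta_zigzag a : (5 <= a)%N -> forall j,
  eta a 1 (2 * j).+1 < eta a 1 (2 * j) /\ eta a 1 (2 * j) < eta a 1 (2 * j).+3.
Proof.
move=> a_ge5 j; rewrite !etaE // !ltr_int mul2n.
have m_ge2 : 2 <= a%:Z * 1%:Z - 2 by lia.
have etaz5 := etazS4 a 1 1; rewrite etaz3 etaz1 in etaz5.
split.
- apply: (rec4_diff_gt0 (p := 0) (q := 1) m_ge2 (@etazS4 a 1)).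
  + by rewrite etaz1 etaz0; lia.
  + by rewrite etaz3 etaz2 etaz1 etaz0; nia.
- apply: (rec4_diff_gt0 (p := 3) (q := 0) m_ge2 (@etazS4 a 1)).
  + by rewrite etaz3 etaz0; nia.
  + by rewrite etaz5 etaz3 etaz2 etaz0; nia.
Qed.

Theorem lemma3p8 (a b : nat) :
  (1 <= b)%N -> (b <= a)%N -> ((2 <= b)%N \/ (b = 1%N /\ (5 <= a)%N)) ->
  (forall j : nat, xi a b j.+2 = ((a * b)%:R - 2) * xi a b j.+1 - xi a b j) /\
      xi a b 0 = a%:R /\
      xi a b 1 = a%:R * ((a * b)%:R - 3) /\
      (forall j : nat, zeta a b j.+2 = ((a * b)%:R - 2) * zeta a b j.+1 - zeta a b j) /\
      zeta a b 0 = (a * b)%:R - 2 /\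
      zeta a b 1 = zeta a b 0 ^+ 2 - 2 /\
          (forall j : nat, a%:R * gamma a b j = b%:R * xi a b j) /\
          (a = 2%N -> b = 2%N -> forall j : nat, eta a b j = eta a b 0) /\
          (b = 1%N -> (5 <= a)%N ->
             forall j : nat, eta a b (2 * j).+1 < eta a b (2 * j)
                          /\ eta a b (2 * j) < eta a b (2 * j).+3) /\
          ((2 <= b)%N -> ~ (a = 2%N /\ b = 2%N) ->
             forall j : nat, eta a b j < eta a b j.+1).
Proof.
move=> b_gt0 b_le_a _; have a_gt0 : (0 < a)%N by lia.
split; first exact: xiSS.
split; first exact: xi0.
split; first exact: xi1.
split; first exact: zetaSS.
split; first exact: zeta0.
split; first exact: zeta1.
split; first exact: a_gamma_eq_b_xi.
split; first by move=> -> ->; apply: eta22.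
split; first by move=> -> a_ge5; apply: eta_zigzag.
move=> b_ge2 not22 j; rewrite !etaE // ltr_int.
by apply: etaz_increasing => //; lia.
Qed.
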